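(* Consider the network model with interest-based mobility described in the context, where the angle $\alpha=\angle(S,D)$ is uniformly distributed on $[0,\pi/2]$, and the routing FM$^0$ in which $S$ can only deliver the message directly to $D$ (at the first meeting of $S$ and $D$). Let $T_{FM^0}$ be the delivery time, so that $\mathbb{E}[T_{FM^0}]=\int_0^{\pi/2}\frac{2}{\pi}\cdot\frac{1}{k\cos\alpha+\delta}\,d\alpha$. Then $\mathbb{E}[T_{FM^0}]=\Omega(\log(1/\delta))$, i.e. there is a constant $c>0$ with $\mathbb{E}[T_{FM^0}]\ge c\log(1/\delta(n))$ for all sufficiently large $n$.
   Context: Interest profiles of $S$ and $D$ are unit vectors in the closed positive orthant of the unit sphere of $\mathbb{R}^m$; $S=(1,0,\dots,0)$ and the angle $\angle(S,D)$ is uniform on $[0,\pi/2]$. Conditional on the profiles, the meeting instants of $S$ and $D$ form a Poisson process of rate $\lambda_{SD}=k\cos\angle(S,D)+\delta$ (interest-based mobility), where $\lambda>0$ is a fixed constant, $\delta=\delta(n)>0$ with $\delta(n)\to0$, and $k=\frac{\pi}{2}(\lambda-\delta)$. *)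

From Stdlib Require Import Reals.
From Coquelicot Require Import Coquelicot.
Open Scope R_scope.

Definition kcoef (lam delta : R) : R := PI / 2 * (lam - delta).

Definition meet_rate (lam delta a : R) : R := kcoef lam delta * cos a + delta.

(* Expected delivery time of FM^0: the first meeting time of S and D is,
   conditionally on the angle a, exponential with rate meet_rate, hence has
   mean 1 / meet_rate; the angle a is uniform on [0, pi/2] (density 2/pi). *)
Definition E_T_FM0 (lam delta : R) : R :=
  RInt (fun a => 2 / PI * / meet_rate lam delta a) 0 (PI / 2).

(* Since cos a <= PI/2 - a on [0, PI/2], the integrand dominates
   (2/PI) / (k (PI/2 - a) + delta), whose integral is (2/(PI k)) ln (1 + k PI/(2 delta)).
   For small delta, k is comparable to lam, so this is at least a constant times ln (1/delta). *)
From Stdlib Require Import Reals Lra.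
From Coquelicot Require Import Coquelicot.
Open Scope R_scope.

Lemma cos_le_PI2_minus (a : R) : 0 <= a <= PI / 2 -> cos a <= PI / 2 - a.
Proof.
  intros [Ha0 Ha1]; rewrite <- sin_shift.
  destruct (Req_dec (PI / 2 - a) 0) as [E | E].
  - rewrite E, sin_0; lra.
  - left; apply sin_lt_x; lra.
Qed.

Lemma is_RInt_inv_affine (k d b : R) : 0 < k -> 0 < d -> 0 <= b ->
  is_RInt (fun a => / (k * (b - a) + d)) 0 b ((ln (k * b + d) - ln d) / k).
Proof.
  intros Hk Hd Hb.
  set (F := fun a => - ln (k * (b - a) + d) / k).
  assert (Hpos : forall x, x <= b -> 0 < k * (b - x) + d) by (intros; nra).
  replace ((ln (k * b + d) - ln d) / k) with (F b - F 0).
  2: { unfold F; rewrite Rminus_0_r, Rminus_diag, Rmult_0_r, Rplus_0_l; field; lra. }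
  apply (is_RInt_derive F).
  - intros x Hx; rewrite Rmax_right in Hx by lra.
    pose proof (Hpos x ltac:(lra)).
    unfold F; auto_derive; [lra | field; lra].
  - intros x Hx; rewrite Rmax_right in Hx by lra.
    pose proof (Hpos x ltac:(lra)).
    apply (@ex_derive_continuous R_AbsRing R_NormedModule); auto_derive; lra.
Qed.

Lemma E_T_FM0_ge (lam d : R) : 0 < d -> 0 < kcoef lam d ->
  2 / (PI * kcoef lam d) * (ln (kcoef lam d * (PI / 2) + d) - ln d) <= E_T_FM0 lam d.
Proof.
  set (k := kcoef lam d); intros Hd Hk.
  pose proof PI_RGT_0 as Hpi.
  pose proof (is_RInt_inv_affine k d (PI / 2) Hk Hd ltac:(lra)) as Hint.
  pose proof (is_RInt_scal _ _ _ (2 / PI) _ Hint) as Hlow.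
  unfold scal in Hlow; simpl in Hlow; unfold mult in Hlow; simpl in Hlow.
  replace (2 / (PI * k) * (ln (k * (PI / 2) + d) - ln d))
    with (2 / PI * ((ln (k * (PI / 2) + d) - ln d) / k)) by (field; lra).
  rewrite <- (is_RInt_unique _ _ _ _ Hlow).
  unfold E_T_FM0, meet_rate; fold k.
  apply RInt_le; [lra | eexists; exact Hlow | |].
  - apply (@ex_RInt_continuous R_CompleteNormedModule); intros z Hz.
    rewrite Rmin_left, Rmax_right in Hz by lra.
    assert (0 <= cos z) by (apply cos_ge_0; lra).
    apply (@ex_derive_continuous R_AbsRing R_NormedModule); auto_derive; nra.
  - intros x Hx.
    assert (0 <= cos x) by (apply cos_ge_0; lra).
    pose proof (cos_le_PI2_minus x ltac:(lra)).
    apply Rmult_le_compat_l; [apply Rlt_le, Rdiv_lt_0_compat; lra |].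
    apply Rinv_le_contravar; nra.
Qed.

Lemma E_T_FM0_ge_ln_inv (lam d : R) : 0 < lam -> 0 < d -> d <= lam / 2 ->
  d <= (PI * PI * lam / 8) * (PI * PI * lam / 8) ->
  2 / (PI * PI * lam) * ln (1 / d) <= E_T_FM0 lam d.
Proof.
  set (A := PI * PI * lam / 8); intros Hlam Hd Hd_lam HdA.
  pose proof PI_RGT_0 as Hpi.
  assert (HPP : 0 < PI * PI * lam) by (apply Rmult_lt_0_compat; [apply Rmult_lt_0_compat |]; lra).
  assert (HA : 0 < A) by (unfold A; lra).
  set (k := kcoef lam d).
  assert (Hk : PI * lam / 4 <= k <= PI * lam / 2) by (unfold k, kcoef; nra).
  assert (Hk0 : 0 < k) by (assert (0 < PI * lam) by (apply Rmult_lt_0_compat; lra); lra).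
  set (L := ln (k * (PI / 2) + d) - ln d).
  assert (HA_le : A <= k * (PI / 2) + d).
  { assert (PI / 2 * (PI * lam / 4) <= PI / 2 * k) by (apply Rmult_le_compat_l; lra).
    unfold A; lra. }
  assert (HL0 : 0 <= L).
  { assert (0 <= k * (PI / 2)) by (apply Rmult_le_pos; lra).
    assert (ln d <= ln (k * (PI / 2) + d)) by (apply ln_le; lra).
    unfold L; lra. }
  assert (HLA : ln A - ln d <= L) by (apply Rplus_le_compat_r, ln_le; lra).
  assert (Hhalf : ln (1 / d) <= 2 * (ln A - ln d)).
  { assert (HlnA2 : ln d <= ln (A * A)) by (apply ln_le; lra).
    rewrite ln_mult in HlnA2 by lra; rewrite ln_div, ln_1 by lra; lra. }
  apply Rle_trans with (4 / (PI * PI * lam) * L).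
  { replace (4 / (PI * PI * lam) * L) with (2 / (PI * PI * lam) * (2 * L)) by (field; lra).
    assert (0 < 2 / (PI * PI * lam)) by (apply Rdiv_lt_0_compat; lra).
    apply Rmult_le_compat_l; lra. }
  apply Rle_trans with (2 / (PI * k) * L); [| apply E_T_FM0_ge; assumption].
  apply Rmult_le_compat_r; [lra |].
  replace (4 / (PI * PI * lam)) with (2 / (PI * (PI * lam / 2))) by (field; lra).
  apply Rmult_le_compat_l; [lra |].
  apply Rinv_le_contravar; [apply Rmult_lt_0_compat; lra |].
  apply Rmult_le_compat_l; lra.
Qed.

Theorem lemma8 (lam : R) (delta : nat -> R) :
  0 < lam ->
  (forall n, 0 < delta n) ->
  is_lim_seq delta 0 ->
  exists c : R, 0 < c /\
    exists N : nat, forall n : nat, (N <= n)%nat ->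
      c * ln (1 / delta n) <= E_T_FM0 lam (delta n).
Proof.
  intros Hlam Hpos Hlim.
  pose proof PI_RGT_0 as Hpi.
  set (A := PI * PI * lam / 8).
  assert (HPP : 0 < PI * PI * lam) by (apply Rmult_lt_0_compat; [apply Rmult_lt_0_compat |]; lra).
  assert (Heps : 0 < Rmin (lam / 2) (A * A)).
  { apply Rmin_pos; [lra | apply Rmult_lt_0_compat; unfold A; lra]. }
  apply is_lim_seq_spec in Hlim.
  destruct (Hlim (mkposreal _ Heps)) as [N HN]; simpl in HN.
  exists (2 / (PI * PI * lam)); split; [apply Rdiv_lt_0_compat; lra |].
  exists N; intros n Hn.
  specialize (HN n Hn); pose proof (Hpos n).
  rewrite Rminus_0_r, Rabs_pos_eq in HN by lra.
  pose proof (Rmin_l (lam / 2) (A * A)); pose proof (Rmin_r (lam / 2) (A * A)).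
  apply E_T_FM0_ge_ln_inv; fold A; lra.
Qed.
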